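(* Let $\mathcal{X}=\{\boldsymbol{x}_1,\dots,\boldsymbol{x}_N\}\subseteq\mathbb{R}^D$, $N\ge2$, with $\|\boldsymbol{x}_j\|_2=1$ for all $j$, and let $\lambda\in(1,\infty)$. Let $\mathcal{X}_0\subseteq\mathcal{X}$. If $\lambda<1/\max_{\boldsymbol{x}'\in\mathcal{X}}\max_{\boldsymbol{x}''\in\mathcal{X},\boldsymbol{x}''\neq\boldsymbol{x}'}|\langle\boldsymbol{x}',\boldsymbol{x}''\rangle|$, then $f_\lambda(\boldsymbol{x}_j,\mathcal{X}_0)=\lambda/2$ for all $\boldsymbol{x}_j\in\mathcal{X}\setminus\mathcal{X}_0$.
   Context: For $\mathcal{X}_0\subseteq\mathcal{X}$ nonempty and $\boldsymbol{x}_j\in\mathcal{X}$, define $f_\lambda(\boldsymbol{x}_j,\mathcal{X}_0):=\min_{\boldsymbol{c}\in\mathbb{R}^N}\|\boldsymbol{c}\|_1+\frac{\lambda}{2}\|\boldsymbol{x}_j-\sum_{i:\boldsymbol{x}_i\in\mathcal{X}_0}c_i\boldsymbol{x}_i\|_2^2$, and by convention $f_\lambda(\boldsymbol{x}_j,\emptyset):=\lambda/2$. If the maximum inner product is $0$, the bound is read as $+\infty$. *)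

From HB Require Import structures.
From mathcomp Require Import all_boot all_order all_algebra.
From mathcomp Require Import classical_sets reals.
Set Implicit Arguments.
Unset Strict Implicit.
Unset Printing Implicit Defensive.
Import Order.TTheory GRing.Theory Num.Theory.
Local Open Scope ring_scope.
Local Open Scope classical_set_scope.

Definition inner (R : realType) (D : nat) (u v : 'rV[R]_D) : R :=
  \sum_(d < D) u 0 d * v 0 d.

Definition sqnorm (R : realType) (D : nat) (u : 'rV[R]_D) : R := inner u u.

Definition l1norm (R : realType) (N : nat) (c : 'rV[R]_N) : R :=
  \sum_(i < N) `|c 0 i|.

Definition objective (R : realType) (D N : nat) (lambda : R)
    (x : 'I_N -> 'rV[R]_D) (X0 : {set 'I_N}) (j : 'I_N) (c : 'rV[R]_N) : R :=
  l1norm c + lambda / 2 * sqnorm (x j - \sum_(i in X0) c 0 i *: x i).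

(* f_lambda(x_j, X0) = min over c in R^N of the objective (as an infimum).
   For X0 empty the formula gives lambda/2, which matches the paper's convention. *)
Definition f_lambda (R : realType) (D N : nat) (lambda : R)
    (x : 'I_N -> 'rV[R]_D) (j : 'I_N) (X0 : {set 'I_N}) : R :=
  inf [set objective lambda x X0 j c | c in [set: 'rV[R]_N]].

Definition max_coherence (R : realType) (D N : nat) (x : 'I_N -> 'rV[R]_D) : R :=
  \big[Num.max/0]_(i < N) \big[Num.max/0]_(k < N | k != i) `|inner (x i) (x k)|.

From HB Require Import structures.
From mathcomp Require Import all_boot all_order all_algebra.
From mathcomp Require Import classical_sets reals.
From mathcomp Require Import ring lra.

Set Implicit Arguments.
Unset Strict Implicit.
Unset Printing Implicit Defensive.
Import Order.TTheory GRing.Theory Num.Theory.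
Local Open Scope ring_scope.
Local Open Scope classical_set_scope.

(* Write s = sum_(i in X0) c_i x_i. Expanding the square, the objective is at
   least ||c||_1 - lambda <x_j, s> + lambda/2 ||x_j||^2. As j is not in X0,
   |<x_j, s>| <= mu ||c||_1 with mu the maximal coherence, and lambda mu <= 1,
   so the objective never drops below its value lambda/2 at c = 0. *)

Lemma inf_image_minimizer (R : realType) (T : Type) (f : T -> R) (t0 : T) :
  (forall t, f t0 <= f t) -> inf [set f t | t in [set: T]] = f t0.
Proof.
move=> f_min; have f_t0 : [set f t | t in [set: T]] (f t0) by exists t0.
have lb : lbound [set f t | t in [set: T]] (f t0) by move=> _ [t _ <-].
apply/eqP; rewrite eq_le lb_le_inf ?andbT //; last by exists (f t0).
by apply: ge_inf => //; exists (f t0).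
Qed.

Lemma mul_le1_of_lt_inv (R : realFieldType) (l m : R) :
  0 <= m -> (m = 0 \/ l < m^-1) -> l * m <= 1.
Proof.
move=> m_ge0 [->|l_lt]; first by rewrite mulr0.
have [->|m_neq0] := eqVneq m 0; first by rewrite mulr0.
have m_gt0 : 0 < m by rewrite lt0r m_neq0.
by rewrite -ler_pdivlMr // div1r ltW.
Qed.

Section InnerProduct.
Variables (R : realType) (D : nat).
Implicit Types u v : 'rV[R]_D.

Lemma sqnorm_ge0 u : 0 <= sqnorm u.
Proof. by apply: sumr_ge0 => d _; rewrite -expr2 sqr_ge0. Qed.

Lemma sqnormB u v : sqnorm (u - v) = sqnorm u - 2 * inner u v + sqnorm v.
Proof.
rewrite /sqnorm /inner mulr_sumr -sumrB -big_split /=.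
by apply: eq_bigr => d _; rewrite !mxE; ring.
Qed.

Lemma inner_sumr (I : finType) (A : {pred I}) (a : I -> R) (v : I -> 'rV[R]_D) u :
  inner u (\sum_(i in A) a i *: v i) = \sum_(i in A) a i * inner u (v i).
Proof.
rewrite /inner; under eq_bigr => d _ do rewrite summxE mulr_sumr.
rewrite exchange_big /=; apply: eq_bigr => i _; rewrite mulr_sumr.
by apply: eq_bigr => d _; rewrite !mxE; ring.
Qed.

End InnerProduct.

Section Coherence.
Variables (R : realType) (D N : nat) (x : 'I_N -> 'rV[R]_D).

Lemma max_coherence_ge0 : 0 <= max_coherence x.
Proof. exact: bigmax_ge_id. Qed.

Lemma inner_le_max_coherence i k :
  k != i -> `|inner (x i) (x k)| <= max_coherence x.
Proof.
move=> ki; apply: le_trans (le_bigmax _ _ i).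
exact: (le_bigmax_cond _ (fun k => `|inner (x i) (x k)|) ki).
Qed.

Lemma inner_sum_le_max_coherence (X0 : {set 'I_N}) j (c : 'rV[R]_N) :
  j \notin X0 ->
  inner (x j) (\sum_(i in X0) c 0 i *: x i) <= max_coherence x * l1norm c.
Proof.
move=> jX0; rewrite inner_sumr /l1norm mulr_sumr.
apply: (@le_trans _ _ (\sum_(i in X0) max_coherence x * `|c 0 i|)).
  apply: ler_sum => i iX0; apply: le_trans (ler_norm _) _.
  rewrite normrM mulrC ler_wpM2r // inner_le_max_coherence //.
  by apply: contraNneq jX0 => <-.
rewrite [leRHS](bigID [in X0]) /= lerDl.
by apply: sumr_ge0 => i _; rewrite mulr_ge0 ?max_coherence_ge0.
Qed.

End Coherence.

Lemma objective0 (R : realType) (D N : nat) (lambda : R)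
    (x : 'I_N -> 'rV[R]_D) (X0 : {set 'I_N}) j :
  objective lambda x X0 j 0 = lambda / 2 * sqnorm (x j).
Proof.
rewrite /objective /l1norm big1 => [|i _]; last by rewrite mxE normr0.
by rewrite add0r big1 ?subr0 // => i _; rewrite mxE scale0r.
Qed.

Lemma objective_ge_objective0 (R : realType) (D N : nat) (lambda : R)
    (x : 'I_N -> 'rV[R]_D) (X0 : {set 'I_N}) j (c : 'rV[R]_N) :
  0 <= lambda -> lambda * max_coherence x <= 1 -> j \notin X0 ->
  objective lambda x X0 j 0 <= objective lambda x X0 j c.
Proof.
move=> lambda_ge0 lambda_mu_le1 jX0.
rewrite objective0 /objective sqnormB.
set s := \sum_(i in X0) _; set L := l1norm c; set mu := max_coherence x.
have s_ge0 := sqnorm_ge0 s.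
have inner_le : lambda * inner (x j) s <= lambda * (mu * L).
  by rewrite ler_wpM2l // inner_sum_le_max_coherence.
have mu_L_le : lambda * (mu * L) <= L.
  by rewrite mulrA ler_piMl // sumr_ge0.
nra.
Qed.

Theorem theorem3 (R : realType) (D N : nat) (x : 'I_N -> 'rV[R]_D)
    (lambda : R) (X0 : {set 'I_N}) :
  (2 <= N)%N ->
  injective x ->
  (forall j, sqnorm (x j) = 1) ->
  1 < lambda ->
  (max_coherence x = 0 \/ lambda < (max_coherence x)^-1) ->
  forall j : 'I_N, j \notin X0 -> f_lambda lambda x j X0 = lambda / 2.
Proof.
move=> _ _ x_unit lambda_gt1 coherence j jX0.
have lambda_ge0 : 0 <= lambda by rewrite ltW // (lt_trans ltr01).
have lambda_mu_le1 := mul_le1_of_lt_inv (max_coherence_ge0 x) coherence.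
rewrite /f_lambda (@inf_image_minimizer _ _ _ 0) => [|c].
  by rewrite objective0 x_unit mulr1.
exact: objective_ge_objective0.
Qed.
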